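(* Define the transformation $T$ on the variables by $T(\tau_j)=\sum_{m\ge0}(-1)^m\binom{j+m}{m}\tau_{j+m}=\tau_j-\binom{j+1}{1}\tau_{j+1}+\binom{j+2}{2}\tau_{j+2}-\cdots$ for $j\ge0$, and set $q_j'=e^{2\pi i T(\tau_j)}$. Then $$\Omega(q_0',q_1',q_2',\ldots)=q_0\,q_1^{-1/2}q_2^{1/3}q_3^{-1/4}\cdots\,\Omega(q_0,q_1,q_2,\ldots),$$ where the prefactor is $\prod_{k\ge0}q_k^{(-1)^k/(k+1)}$.
   Context: For $k\ge0$, $q_k=e^{2\pi i\tau_k}$ and $q_k^a:=e^{2\pi i a\tau_k}$. Let $\xi(s)=\sum_{n\ge1}(n-\tfrac12)^{-s}=(2^s-1)\zeta(s)$ (analytically continued). Define $$\Omega(q_0,q_1,q_2,\ldots)=\prod_{r\ge1,\ r\text{ odd}}q_r^{-\xi(-r)}\prod_{n\ge0}\Big(1+\prod_{k\ge0}q_k^{(n+\frac12)^k}\Big)\Big(1+\prod_{k\ge0}q_k^{(-1)^{k+1}(n+\frac12)^k}\Big).$$ The identity is understood as an identity of formal expansions in the variables $\tau_j$, $j\neq1$, with coefficients functions of $\tau_1$. *)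

From Stdlib Require Import Reals List Arith.
From Coquelicot Require Import Coquelicot.
Import ListNotations.
Open Scope R_scope.

Definition cexp (z : C) : C := (exp (fst z) * cos (snd z), exp (fst z) * sin (snd z)).
Fixpoint cpow (z : C) (n : nat) : C :=
  match n with O => RtoC 1 | S m => Cmult z (cpow z m) end.
Definition csum (l : list C) : C := fold_right Cplus (RtoC 0) l.
Definition cprod (l : list C) : C := fold_right Cmult (RtoC 1) l.
Definition two_pi_i : C := (0, 2 * PI).

(* B_0 = 1, B_n = -1/(n+1) * sum_{k<n} binom(n+1,k) B_k  (so B_1 = -1/2) *)
Fixpoint bern_upto (n : nat) : list R :=
  match n with
  | O => [1]
  | S m => let l := bern_upto m in
           l ++ [ - / INR (S n) *
                  fold_right Rplus 0
                    (map (fun k => Binomial.C (S n) k * nth k l 0) (seq 0 n)) ]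
  end.
Definition bernoulli (n : nat) : R := nth n (bern_upto n) 0.
(* zeta(-r) = - B_{r+1} / (r+1) for r >= 1 *)
Definition zeta_neg (r : nat) : R := - bernoulli (S r) / INR (S r).
Definition xi_neg (r : nat) : R := (/ 2 ^ r - 1) * zeta_neg r.

(* A multi-index a : list nat encodes the monomial prod_j tau_j^(nth j a 0%nat)
   (trailing zeros irrelevant).  tau_1 is NOT a formal variable: coefficients
   are functions of tau_1 (the second argument, of type C). *)
Definition fps := list nat -> C -> C.

Fixpoint subidx (a : list nat) : list (list nat) :=
  match a with
  | [] => [ [] ]
  | x :: s => flat_map (fun b => map (cons b) (subidx s)) (seq 0 (S x))
  end.
Definition idxsub (a b : list nat) : list nat :=
  map (fun j => (nth j a 0%nat - nth j b 0%nat)%nat) (seq 0 (length a)).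

Definition fps_one : fps :=
  fun a _ => if forallb (fun x => Nat.eqb x 0) a then RtoC 1 else RtoC 0.
Definition fps_add (f g : fps) : fps := fun a z => Cplus (f a z) (g a z).
Definition fps_mul (f g : fps) : fps :=
  fun a z => csum (map (fun b => Cmult (f b z) (g (idxsub a b) z)) (subidx a)).

(* A linear form sum_j L j * tau_j (all j, including j = 1). *)
Definition lin := nat -> C.

(* formal expansion of exp(2 pi i sum_j L_j tau_j): the tau_1 part stays a
   function of tau_1, the other variables are expanded formally. *)
Definition fps_explin (L : lin) : fps :=
  fun a z =>
    if Nat.eqb (nth 1 a 0%nat) 0 then
      Cmult (cexp (Cmult two_pi_i (Cmult (L 1%nat) z)))
        (cprod (map (fun j => if Nat.eqb j 1 then RtoC 1 else
               Cdiv (cpow (Cmult two_pi_i (L j)) (nth j a 0%nat))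
                    (RtoC (INR (fact (nth j a 0%nat)))))
           (seq 0 (length a))))
    else RtoC 0.

(* A "family of variables" t : nat -> lin, t k being the linear form that
   plays the role of tau_k (t k = tau_k, or t k = T(tau_k)).  Both families
   used below are triangular (t k only involves tau_i with i >= k), so the
   coefficient of tau_i in sum_k c_k t_k is the finite sum over k <= i. *)
Definition lincomb (c : nat -> C) (t : nat -> lin) : lin :=
  fun i => csum (map (fun k => Cmult (c k) (t k i)) (seq 0 (S i))).

Definition tvar : nat -> lin := fun k i => if Nat.eqb k i then RtoC 1 else RtoC 0.
(* T(tau_k) = sum_{m>=0} (-1)^m binom(k+m, m) tau_{k+m} *)
Definition tT : nat -> lin :=
  fun k i => if Nat.leb k i then RtoC ((-1) ^ (i - k) * Binomial.C i (i - k)) else RtoC 0.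

Definition c_reg (k : nat) : C := if Nat.odd k then RtoC (- xi_neg k) else RtoC 0.
Definition c_plus (n k : nat) : C := RtoC ((INR n + /2) ^ k).
Definition c_minus (n k : nat) : C := RtoC ((-1) ^ (S k) * (INR n + /2) ^ k).
Definition c_pref (k : nat) : C := RtoC ((-1) ^ k / INR (S k)).

Fixpoint prod_factors (t : nat -> lin) (N : nat) : fps :=
  match N with
  | O => fps_one
  | S n => fps_mul (prod_factors t n)
             (fps_mul (fps_add fps_one (fps_explin (lincomb (c_plus n) t)))
                      (fps_add fps_one (fps_explin (lincomb (c_minus n) t))))
  end.

(* Partial product (n < N) of Omega evaluated at q_k = e^{2 pi i t_k}:
   prod_{r odd} q_r^{-xi(-r)} prod_{n<N} (1 + prod_k q_k^{(n+1/2)^k})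
                                         (1 + prod_k q_k^{(-1)^{k+1}(n+1/2)^k}) *)
Definition Omega_partial (t : nat -> lin) (N : nat) : fps :=
  fps_mul (fps_explin (lincomb c_reg t)) (prod_factors t N).

Definition prefactor : fps := fps_explin (lincomb c_pref tvar).

(* Fix [tau_1 = z] with [Im z > 0] and a multi-index [a] in the other variables. On a linear form
   [sum_k s x^k tau_k] the substitution [T] acts as [x -> x - 1] (binomial theorem). So [T] turns
   the [+]-exponents [(n + 1/2)^k] of the factor [n] of [Omega] into those of the factor [n - 1],
   and the [-]-exponents of the factor [n] into those of the factor [n + 1]. The [+]-factor
   [n = 0] becomes [1 + E = E (1 + 1/E)] with [1/E] the exponential of the [-]-factor [n = 0];
   [E] merges with the transformed regularising factor into the original one times the prefactor,
   by [sum_(r odd) binom(i, r) xi(-r) = 1/(i + 1) - 2^-i]. This identity is the coefficient of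
   [x^i/i!] in [Xi(x) (e^x - 1) = (e^x - 1)/x - e^(x/2)], [Xi(x) = sum_(r odd) xi(-r) x^r/r!],
   which follows from [xi(-r) = (2^-r - 1) zeta(-r)] and [zeta(-r) = -B_(r+1)/(r+1)].
   Hence the partial product over [n <= N] in [q'] is the prefactor times the partial product
   over [n < N] in [q], times the [-]-factors [N] and [N + 1]. Every factor [n] is [1 + O(e^(-pi n Im z))]
   for the submultiplicative seminorm [sum_(b <= a) |f_b|]; so the partial products converge
   coefficientwise and the two extra factors tend to [1]. *)

From Stdlib Require Import Reals List Arith Lia Lra FunctionalExtensionality.
From Coquelicot Require Import Coquelicot.
Import ListNotations.
Open Scope R_scope.

(** * Finite sums *)

Definition fsum {A : Type} (zero : A) (add : A -> A -> A) (n : nat) (F : nat -> A) : A :=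
  fold_right add zero (map F (seq 0 n)).

Notation sumC := (fsum (RtoC 0) Cplus).
Notation sumR := (fsum 0 Rplus).

Section FiniteSums.
Context {A : Type} {zero one : A} {add mul sub : A -> A -> A} {opp : A -> A}.
Hypothesis rt : ring_theory zero one add mul sub opp eq.
Add Ring A_ring : rt.

Lemma fold_add_app (l1 l2 : list A) :
  fold_right add zero (l1 ++ l2) = add (fold_right add zero l1) (fold_right add zero l2).
Proof. induction l1 as [|x l IH]; simpl; [ring | rewrite IH; ring]. Qed.

Lemma fold_add_flat_map {B D : Type} (h : D -> A) (k : B -> list D) (l : list B) :
  fold_right add zero (map h (flat_map k l)) =
  fold_right add zero (map (fun y => fold_right add zero (map h (k y))) l).
Proof. induction l as [|y l IH]; simpl; auto. rewrite map_app, fold_add_app, IH. reflexivity. Qed.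

Lemma fsum_S n F : fsum zero add (S n) F = add (fsum zero add n F) (F n).
Proof. unfold fsum. rewrite seq_S, map_app, fold_add_app. simpl. ring. Qed.

Lemma fsum_Sl n F : fsum zero add (S n) F = add (F 0%nat) (fsum zero add n (fun k => F (S k))).
Proof. unfold fsum. simpl. rewrite <- seq_shift, map_map. reflexivity. Qed.

Lemma fsum_ext n F G :
  (forall k, (k < n)%nat -> F k = G k) -> fsum zero add n F = fsum zero add n G.
Proof.
  intros E. unfold fsum. f_equal. apply map_ext_in. intros k Hk. apply in_seq in Hk. apply E. lia.
Qed.

Lemma fsum_eq0 n F : (forall k, (k < n)%nat -> F k = zero) -> fsum zero add n F = zero.
Proof.
  intros E. induction n as [|n IH]; [reflexivity|].
  rewrite fsum_S, IH, E; [ring | lia | intros; apply E; lia].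
Qed.

Lemma fsum_add n F G :
  fsum zero add n (fun k => add (F k) (G k)) = add (fsum zero add n F) (fsum zero add n G).
Proof. induction n as [|n IH]; [unfold fsum; simpl; ring | rewrite !fsum_S, IH; ring]. Qed.

Lemma fsum_mull n c F : fsum zero add n (fun k => mul c (F k)) = mul c (fsum zero add n F).
Proof. induction n as [|n IH]; [unfold fsum; simpl; ring | rewrite !fsum_S, IH; ring]. Qed.

Lemma fsum_mulr n c F : fsum zero add n (fun k => mul (F k) c) = mul (fsum zero add n F) c.
Proof. induction n as [|n IH]; [unfold fsum; simpl; ring | rewrite !fsum_S, IH; ring]. Qed.

Lemma fsum_rev n F : fsum zero add (S n) F = fsum zero add (S n) (fun k => F (n - k)%nat).
Proof.
  induction n as [|n IH]; [reflexivity|].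
  rewrite (fsum_S (S n) F), (fsum_Sl (S n) (fun k => F (S n - k)%nat)), IH, Nat.sub_0_r.
  simpl. ring.
Qed.

Lemma fsum_triangle n (G : nat -> nat -> A) :
  fsum zero add (S n) (fun j => fsum zero add (S j) (fun i => G i j)) =
  fsum zero add (S n) (fun i => fsum zero add (S (n - i)) (fun k => G i (i + k)%nat)).
Proof.
  induction n as [|n IH]; [reflexivity|].
  set (H := fun i => fsum zero add (S (S n - i)) (fun k => G i (i + k)%nat)).
  rewrite (fsum_S (S n) (fun j => fsum zero add (S j) (fun i => G i j))), IH.
  rewrite (fsum_S (S n) H), (fsum_S (S n) (fun i => G i (S n))).
  rewrite (fsum_ext (S n) H (fun i => add (fsum zero add (S (n - i)) (fun k => G i (i + k)%nat))
                                        (G i (S n)))).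
  - rewrite fsum_add. unfold H. rewrite Nat.sub_diag. rewrite (fsum_S 0), Nat.add_0_r.
    change (fsum zero add 0 ?f) with zero. ring.
  - intros i Hi. unfold H. replace (S n - i)%nat with (S (n - i)) by lia.
    rewrite fsum_S. do 2 f_equal. lia.
Qed.

End FiniteSums.

Lemma sumR_le n F G : (forall k, (k < n)%nat -> F k <= G k) -> sumR n F <= sumR n G.
Proof.
  induction n as [|n IH]; intros E; [apply Rle_refl|].
  rewrite !(fsum_S RTheory). pose proof (E n (Nat.lt_succ_diag_r n)).
  assert (sumR n F <= sumR n G) by (apply IH; intros; apply E; lia). lra.
Qed.

Lemma sumR_ge0 n F : (forall k, (k < n)%nat -> 0 <= F k) -> 0 <= sumR n F.
Proof.
  intros E. replace 0 with (sumR n (fun _ => 0)) at 1 by (apply (fsum_eq0 RTheory); auto).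
  apply sumR_le. exact E.
Qed.

Lemma sumR_mono_n n m F : (n <= m)%nat -> (forall k, 0 <= F k) -> sumR n F <= sumR m F.
Proof.
  intros Hnm HF. induction Hnm as [|m _ IH]; [lra|].
  rewrite (fsum_S RTheory). specialize (HF m). lra.
Qed.

Lemma term_le_sumR n F k : (k < n)%nat -> (forall k, 0 <= F k) -> F k <= sumR n F.
Proof.
  intros Hk HF. apply Rle_trans with (sumR (S k) F); [|apply sumR_mono_n; auto].
  rewrite (fsum_S RTheory). pose proof (sumR_ge0 k F (fun j _ => HF j)). lra.
Qed.

Lemma sumR_sum_f_R0 n F : sumR (S n) F = sum_f_R0 F n.
Proof.
  induction n as [|n IH]; [unfold fsum; simpl; ring | rewrite (fsum_S RTheory), IH; reflexivity].
Qed.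

Lemma RtoC_sumR n F : RtoC (sumR n F) = sumC n (fun k => RtoC (F k)).
Proof.
  induction n as [|n IH]; [reflexivity|].
  rewrite (fsum_S RTheory), (fsum_S C_ring_theory), <- IH. apply RtoC_plus.
Qed.

(** * Formal series in the variables [tau_j], [j <> 1], at fixed [tau_1] *)

Definition series := list nat -> C.

Definition sadd (f g : series) : series := fun a => Cplus (f a) (g a).
Definition sopp (f : series) : series := fun a => Copp (f a).
Definition ssub (f g : series) : series := fun a => Cminus (f a) (g a).
Definition szero : series := fun _ => RtoC 0.
Definition sone : series :=
  fun a => if forallb (fun x => Nat.eqb x 0) a then RtoC 1 else RtoC 0.
Definition smul (f g : series) : series :=
  fun a => csum (map (fun b => Cmult (f b) (g (idxsub a b))) (subidx a)).
Definition sscale (c : C) (f : series) : series := fun a => Cmult c (f a).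

Definition slice (f : series) (y : nat) : series := fun t => f (y :: t).

Lemma idxsub_cons x s y t : idxsub (x :: s) (y :: t) = (x - y)%nat :: idxsub s t.
Proof.
  unfold idxsub. cbn [length seq map]. rewrite <- seq_shift, map_map. reflexivity.
Qed.

Lemma smul_nil f g : smul f g [] = Cmult (f []) (g []).
Proof. unfold smul, csum. simpl. change (idxsub [] []) with (@nil nat). ring. Qed.

Lemma smul_cons f g x s :
  smul f g (x :: s) = sumC (S x) (fun y => smul (slice f y) (slice g (x - y)) s).
Proof.
  unfold smul at 1, csum. cbn [subidx]. rewrite (fold_add_flat_map C_ring_theory).
  unfold fsum. f_equal. apply map_ext. intro y. rewrite map_map. unfold smul, csum. f_equal.
  apply map_ext. intro t. rewrite idxsub_cons. reflexivity.
Qed.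

Lemma smul_comm f g : smul f g = smul g f.
Proof.
  apply functional_extensionality. intro a. revert f g.
  induction a as [|x s IH]; intros f g.
  - rewrite !smul_nil. ring.
  - rewrite !smul_cons, (fsum_rev C_ring_theory x). apply fsum_ext. intros y Hy.
    rewrite IH. do 3 f_equal. lia.
Qed.

Lemma smul_addl f g h : smul (sadd f g) h = sadd (smul f h) (smul g h).
Proof.
  apply functional_extensionality. intro a. unfold smul, sadd, csum.
  induction (subidx a) as [|b l IH]; simpl; [ring | rewrite IH; ring].
Qed.

Lemma smul_scalel c f g : smul (sscale c f) g = sscale c (smul f g).
Proof.
  apply functional_extensionality. intro a. unfold smul, sscale, csum.
  induction (subidx a) as [|b l IH]; simpl; [ring | rewrite IH; ring].
Qed.

Lemma smul_scaler c f g : smul f (sscale c g) = sscale c (smul f g).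
Proof. rewrite smul_comm, smul_scalel, smul_comm. reflexivity. Qed.

Lemma smul_suml n (F : nat -> series) h :
  smul (fun t => sumC n (fun u => F u t)) h = fun a => sumC n (fun u => smul (F u) h a).
Proof.
  apply functional_extensionality. intro a. unfold smul, csum.
  induction (subidx a) as [|b l IH]; simpl.
  - symmetry. apply (fsum_eq0 C_ring_theory). reflexivity.
  - rewrite IH, <- (fsum_mulr C_ring_theory), <- (fsum_add C_ring_theory). reflexivity.
Qed.

Lemma slice_smul f g y :
  slice (smul f g) y = fun t => sumC (S y) (fun u => smul (slice f u) (slice g (y - u)) t).
Proof. apply functional_extensionality. intro t. apply smul_cons. Qed.

Lemma smul_assoc f g h : smul f (smul g h) = smul (smul f g) h.
Proof.
  apply functional_extensionality. intro a. revert f g h.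
  induction a as [|x s IH]; intros f g h.
  - rewrite !smul_nil. ring.
  - rewrite !smul_cons.
    rewrite (fsum_ext (S x) (fun y => smul (slice (smul f g) y) (slice h (x - y)) s)
      (fun y => sumC (S y) (fun u => smul (smul (slice f u) (slice g (y - u)))
          (slice h (x - y)) s))).
    2:{ intros y _. rewrite slice_smul, smul_suml. reflexivity. }
    rewrite (fsum_triangle C_ring_theory x). apply fsum_ext. intros u Hu.
    rewrite smul_comm, slice_smul, smul_suml. apply fsum_ext. intros v _.
    replace (u + v - u)%nat with v by lia. replace (x - (u + v))%nat with (x - u - v)%nat by lia.
    rewrite (smul_comm _ (slice f u)). apply IH.
Qed.

Lemma slice_sone_0 : slice sone 0 = sone.
Proof. reflexivity. Qed.

Lemma slice_sone_S y : slice sone (S y) = szero.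
Proof. reflexivity. Qed.

Lemma smul1l f : smul sone f = f.
Proof.
  apply functional_extensionality. intro a. revert f.
  induction a as [|x s IH]; intro f.
  - rewrite smul_nil. unfold sone. simpl. ring.
  - rewrite smul_cons, fsum_Sl, slice_sone_0, IH, Nat.sub_0_r.
    rewrite (fsum_eq0 C_ring_theory); [unfold slice; ring|].
    intros k _. rewrite slice_sone_S. unfold smul, szero, csum.
    induction (subidx s) as [|b l IHl]; simpl; [reflexivity | rewrite IHl; ring].
Qed.

Lemma series_ring_theory : ring_theory szero sone sadd smul ssub sopp eq.
Proof.
  constructor; intros;
    try (apply functional_extensionality; intro; unfold sadd, szero, ssub, sopp; ring).
  - apply smul1l.
  - apply smul_comm.
  - apply smul_assoc.
  - apply smul_addl.
Qed.
Add Ring series_ring : series_ring_theory.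

(** * Exponentials of linear forms *)

Definition factorized (phi : nat -> nat -> C) : series :=
  fun a => cprod (map (fun j => phi j (nth j a 0%nat)) (seq 0 (length a))).

Lemma factorized_cons phi x s :
  factorized phi (x :: s) = Cmult (phi 0%nat x) (factorized (fun j => phi (S j)) s).
Proof. unfold factorized. cbn [length seq map]. rewrite <- seq_shift, map_map. reflexivity. Qed.

Lemma slice_factorized phi y :
  slice (factorized phi) y = sscale (phi 0%nat y) (factorized (fun j => phi (S j))).
Proof. apply functional_extensionality. intro t. apply factorized_cons. Qed.

Lemma factorized_mul phi psi :
  smul (factorized phi) (factorized psi) =
  factorized (fun j k => sumC (S k) (fun i => Cmult (phi j i) (psi j (k - i)%nat))).
Proof.
  apply functional_extensionality. intro a. revert phi psi.
  induction a as [|x s IH]; intros phi psi.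
  - rewrite smul_nil. unfold factorized, cprod. simpl. ring.
  - rewrite smul_cons, factorized_cons, <- (fsum_mulr C_ring_theory). apply fsum_ext. intros y _.
    rewrite !slice_factorized, smul_scalel, smul_scaler. unfold sscale. rewrite IH. ring.
Qed.

Lemma factorized_ext phi psi : (forall j k, phi j k = psi j k) -> factorized phi = factorized psi.
Proof.
  intros E. f_equal. do 2 (apply functional_extensionality; intro). apply E.
Qed.

Lemma factorized_delta0 : factorized (fun _ k => if Nat.eqb k 0 then RtoC 1 else RtoC 0) = sone.
Proof.
  apply functional_extensionality. intro a. induction a as [|x s IH]; [reflexivity|].
  rewrite factorized_cons, IH. unfold sone. destruct x; simpl; ring.
Qed.

Definition expcoef (w : C) (k : nat) : C := Cdiv (cpow w k) (RtoC (INR (fact k))).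

Lemma RtoC_INR_fact_neq0 k : RtoC (INR (fact k)) <> RtoC 0.
Proof. intros E. apply (INR_fact_neq_0 k), RtoC_inj, E. Qed.

Lemma RtoC_INR_S_neq0 k : RtoC (INR (S k)) <> RtoC 0.
Proof. intros E. apply (not_0_INR (S k)); [lia | apply RtoC_inj, E]. Qed.

Lemma expcoef_0 w : expcoef w 0 = RtoC 1.
Proof. unfold expcoef. simpl. field. Qed.

Lemma expcoef_S w k : Cmult (RtoC (INR (S k))) (expcoef w (S k)) = Cmult w (expcoef w k).
Proof.
  unfold expcoef. simpl cpow. rewrite fact_simpl, mult_INR, RtoC_mult.
  field. split; [apply RtoC_INR_fact_neq0 | apply RtoC_INR_S_neq0].
Qed.

Lemma Cmult_reg_l c x y : c <> RtoC 0 -> Cmult c x = Cmult c y -> x = y.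
Proof.
  intros Hc E. replace x with (Cmult (Cinv c) (Cmult c x)) by (field; exact Hc).
  rewrite E. field. exact Hc.
Qed.

Lemma expcoef_add u v k :
  sumC (S k) (fun i => Cmult (expcoef u i) (expcoef v (k - i))) = expcoef (Cplus u v) k.
Proof.
  induction k as [|k IH].
  - unfold fsum, csum. simpl. rewrite !expcoef_0. ring.
  - apply (Cmult_reg_l _ _ _ (RtoC_INR_S_neq0 k)).
    rewrite expcoef_S, <- IH, <- (fsum_mull C_ring_theory).
    set (t i := Cmult (expcoef u i) (expcoef v (S k - i))).
    rewrite (fsum_ext (S (S k)) _
      (fun i => Cplus (Cmult (RtoC (INR i)) (t i)) (Cmult (RtoC (INR (S k - i))) (t i)))).
    2:{ intros i Hi. rewrite <- Cmult_plus_distr_r, <- RtoC_plus, <- plus_INR.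
        do 3 f_equal. lia. }
    rewrite (fsum_add C_ring_theory), fsum_Sl, (fsum_S C_ring_theory (S k)).
    rewrite (fsum_ext (S k) (fun i => Cmult (RtoC (INR (S i))) (t (S i)))
               (fun i => Cmult u (Cmult (expcoef u i) (expcoef v (k - i))))).
    2:{ intros i Hi. unfold t. replace (S k - S i)%nat with (k - i)%nat by lia.
        rewrite Cmult_assoc, expcoef_S. ring. }
    rewrite (fsum_ext (S k) (fun i => Cmult (RtoC (INR (S k - i))) (t i))
               (fun i => Cmult v (Cmult (expcoef u i) (expcoef v (k - i))))).
    2:{ intros i Hi. unfold t. replace (S k - i)%nat with (S (k - i)) by lia.
        rewrite (Cmult_comm (expcoef u i)), Cmult_assoc, expcoef_S. ring. }
    rewrite !(fsum_mull C_ring_theory), Nat.sub_diag. simpl INR. ring.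
Qed.

Lemma cexp_add w1 w2 : cexp (Cplus w1 w2) = Cmult (cexp w1) (cexp w2).
Proof.
  destruct w1 as [a1 b1], w2 as [a2 b2]. unfold cexp. simpl.
  apply injective_projections; simpl; rewrite exp_plus, ?cos_plus, ?sin_plus; ring.
Qed.

Lemma cexp_0 : cexp (RtoC 0) = RtoC 1.
Proof.
  unfold cexp. simpl. rewrite exp_0, cos_0, sin_0. apply injective_projections; simpl; ring.
Qed.

Definition sexp (z : C) (L : lin) : series := fun a => fps_explin L a z.

Definition exp_factor (L : lin) (j k : nat) : C :=
  if Nat.eqb j 1 then (if Nat.eqb k 0 then RtoC 1 else RtoC 0)
  else expcoef (Cmult two_pi_i (L j)) k.

Lemma cprod_eq0 (F : nat -> C) l j : In j l -> F j = RtoC 0 -> cprod (map F l) = RtoC 0.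
Proof.
  unfold cprod. induction l as [|i l IH]; simpl; [tauto|].
  intros [<-|Hj] HF; [rewrite HF | rewrite (IH Hj HF)]; ring.
Qed.

Lemma sexp_factorized z L :
  sexp z L = sscale (cexp (Cmult two_pi_i (Cmult (L 1%nat) z))) (factorized (exp_factor L)).
Proof.
  apply functional_extensionality. intro a. unfold sexp, fps_explin, sscale, factorized.
  destruct (Nat.eqb (nth 1 a 0%nat) 0) eqn:Ha1.
  - do 2 f_equal. apply map_ext. intro j. unfold exp_factor.
    destruct (Nat.eqb_spec j 1) as [->|_]; [rewrite Ha1|]; reflexivity.
  - rewrite (cprod_eq0 _ _ 1%nat); [ring| |].
    + apply in_seq. split; [lia|]. destruct (Nat.lt_ge_cases 1 (length a)) as [|Hl]; [lia|].
      rewrite nth_overflow in Ha1 by exact Hl. discriminate.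
    + unfold exp_factor. simpl. rewrite Ha1. reflexivity.
Qed.

Lemma sexp_add z L1 L2 : smul (sexp z L1) (sexp z L2) = sexp z (fun i => Cplus (L1 i) (L2 i)).
Proof.
  rewrite !sexp_factorized, smul_scalel, smul_scaler, factorized_mul.
  apply functional_extensionality. intro a. unfold sscale.
  rewrite (factorized_ext _ (exp_factor (fun i => Cplus (L1 i) (L2 i)))).
  - rewrite Cmult_assoc, <- cexp_add. do 2 f_equal. ring.
  - intros j k. unfold exp_factor. destruct (Nat.eqb j 1).
    + rewrite fsum_Sl, (fsum_eq0 C_ring_theory) by (intros; simpl; ring).
      destruct k; simpl; ring.
    + rewrite expcoef_add. f_equal. ring.
Qed.

Lemma sexp_zero z : sexp z (fun _ => RtoC 0) = sone.
Proof.
  rewrite sexp_factorized, <- factorized_delta0, Cmult_0_l, Cmult_0_r, cexp_0.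
  apply functional_extensionality. intro a. unfold sscale. rewrite Cmult_1_l.
  apply (f_equal (fun F => F a)), factorized_ext. intros j k. unfold exp_factor.
  destruct (Nat.eqb j 1); [reflexivity|]. destruct k as [|k].
  - apply expcoef_0.
  - unfold expcoef. simpl cpow. simpl Nat.eqb. rewrite Cmult_0_r, Cmult_0_l.
    field. apply RtoC_INR_fact_neq0.
Qed.

Definition at_tau1 (z : C) (F : fps) : series := fun a => F a z.

Lemma at_tau1_mul z f g : at_tau1 z (fps_mul f g) = smul (at_tau1 z f) (at_tau1 z g).
Proof. reflexivity. Qed.

Lemma at_tau1_add z f g : at_tau1 z (fps_add f g) = sadd (at_tau1 z f) (at_tau1 z g).
Proof. reflexivity. Qed.

Lemma at_tau1_one z : at_tau1 z fps_one = sone.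
Proof. reflexivity. Qed.

Lemma at_tau1_explin z L : at_tau1 z (fps_explin L) = sexp z L.
Proof. reflexivity. Qed.

(** * The substitution [T] *)

Lemma lincomb_tvar c : lincomb c tvar = c.
Proof.
  apply functional_extensionality. intro i.
  change (lincomb c tvar i) with (sumC (S i) (fun k => Cmult (c k) (tvar k i))).
  rewrite (fsum_S C_ring_theory), (fsum_eq0 C_ring_theory).
  - unfold tvar. rewrite Nat.eqb_refl. ring.
  - intros k Hk. unfold tvar. destruct (Nat.eqb_spec k i); [lia | ring].
Qed.

Lemma lincomb_tT c i :
  lincomb c tT i = sumC (S i) (fun k => Cmult (c k) (RtoC ((-1) ^ (i - k) * Binomial.C i k))).
Proof.
  apply fsum_ext. intros k Hk. unfold tT.
  replace (Nat.leb k i) with true by (symmetry; apply Nat.leb_le; lia).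
  rewrite <- pascal_step1 by lia. reflexivity.
Qed.

Lemma sum_binomial x y n :
  sumR (S n) (fun k => Binomial.C n k * x ^ k * y ^ (n - k)) = (x + y) ^ n.
Proof. rewrite sumR_sum_f_R0, binomial. reflexivity. Qed.

Lemma lincomb_tT_pow (s x : R) i :
  lincomb (fun k => RtoC (s * x ^ k)) tT i = RtoC (s * (x - 1) ^ i).
Proof.
  rewrite lincomb_tT. replace (x - 1) with (x + -1) by ring.
  rewrite <- sum_binomial, <- (fsum_mull RTheory), RtoC_sumR.
  apply fsum_ext. intros k _. rewrite <- RtoC_mult. f_equal. ring.
Qed.

Lemma c_plus_pow n : c_plus n = fun k => RtoC (1 * (INR n + /2) ^ k).
Proof. apply functional_extensionality. intro k. unfold c_plus. f_equal. ring. Qed.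

Lemma c_minus_pow n : c_minus n = fun k => RtoC (-1 * (- (INR n + /2)) ^ k).
Proof.
  apply functional_extensionality. intro k. unfold c_minus. f_equal.
  replace (- (INR n + /2)) with (-1 * (INR n + /2)) by ring.
  rewrite Rpow_mult_distr. simpl pow. ring.
Qed.

Lemma lincomb_tT_c_plus_S n : lincomb (c_plus (S n)) tT = c_plus n.
Proof.
  apply functional_extensionality. intro i.
  rewrite c_plus_pow, lincomb_tT_pow, c_plus_pow, S_INR.
  replace (INR n + 1 + /2 - 1) with (INR n + /2) by ring. reflexivity.
Qed.

Lemma lincomb_tT_c_plus_0 : lincomb (c_plus 0) tT = fun i => Copp (c_minus 0 i).
Proof.
  apply functional_extensionality. intro i.
  rewrite c_plus_pow, lincomb_tT_pow, c_minus_pow, <- RtoC_opp. simpl INR. f_equal.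
  replace (0 + /2 - 1) with (- (0 + /2)) by field. ring.
Qed.

Lemma lincomb_tT_c_minus n : lincomb (c_minus n) tT = c_minus (S n).
Proof.
  apply functional_extensionality. intro i.
  rewrite c_minus_pow, lincomb_tT_pow, c_minus_pow, S_INR.
  replace (- (INR n + /2) - 1) with (- (INR n + 1 + /2)) by ring. reflexivity.
Qed.

(** * Bernoulli numbers and the values [xi(-r)] *)

Definition fser := nat -> R.

Definition fmul (f g : fser) : fser := fun n => sumR (S n) (fun k => f k * g (n - k)%nat).
Definition fadd (f g : fser) : fser := fun n => f n + g n.
Definition fopp (f : fser) : fser := fun n => - f n.
Definition fsub (f g : fser) : fser := fun n => f n - g n.
Definition fzero : fser := fun _ => 0.
Definition fone : fser := fun n => if Nat.eqb n 0 then 1 else 0.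
Definition fX : fser := fun n => if Nat.eqb n 1 then 1 else 0.

Lemma fmul_comm f g : fmul f g = fmul g f.
Proof.
  apply functional_extensionality. intro n. unfold fmul. rewrite (fsum_rev RTheory).
  apply fsum_ext. intros k Hk. replace (n - (n - k))%nat with k by lia. ring.
Qed.

Lemma fmul_assoc f g h : fmul f (fmul g h) = fmul (fmul f g) h.
Proof.
  apply functional_extensionality. intro n. unfold fmul.
  rewrite (fsum_ext (S n) (fun k => sumR (S k) (fun i => f i * g (k - i)%nat) * h (n - k)%nat)
                    (fun k => sumR (S k) (fun i => f i * g (k - i)%nat * h (n - k)%nat)))
    by (intros; rewrite <- (fsum_mulr RTheory); reflexivity).
  rewrite (fsum_triangle RTheory n). apply fsum_ext. intros i Hi.
  rewrite <- (fsum_mull RTheory). apply fsum_ext. intros k Hk.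
  replace (i + k - i)%nat with k by lia.
  replace (n - (i + k))%nat with (n - i - k)%nat by lia. ring.
Qed.

Lemma fmul1l f : fmul fone f = f.
Proof.
  apply functional_extensionality. intro n. unfold fmul. rewrite fsum_Sl, (fsum_eq0 RTheory).
  - unfold fone. simpl. rewrite Nat.sub_0_r. ring.
  - intros k _. unfold fone. simpl. ring.
Qed.

Lemma fser_ring_theory : ring_theory fzero fone fadd fmul fsub fopp eq.
Proof.
  constructor; intros;
    try (apply functional_extensionality; intro; unfold fadd, fzero, fsub, fopp; ring).
  - apply fmul1l.
  - apply fmul_comm.
  - apply fmul_assoc.
  - apply functional_extensionality. intro n. unfold fmul, fadd.
    rewrite <- (fsum_add RTheory). apply fsum_ext. intros. ring.
Qed.
Add Ring fser_ring : fser_ring_theory.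

Lemma fmulX_S f n : fmul fX f (S n) = f n.
Proof.
  unfold fmul. rewrite !fsum_Sl, (fsum_eq0 RTheory) by (intros; unfold fX; simpl; ring).
  unfold fX. simpl. rewrite Nat.sub_0_r. ring.
Qed.

Lemma fmulX_0 f : fmul fX f 0%nat = 0.
Proof. unfold fmul, fsum, fX. simpl. ring. Qed.

Lemma fmulX_inj f g : fmul fX f = fmul fX g -> f = g.
Proof.
  intros E. apply functional_extensionality. intro n. rewrite <- (fmulX_S f), <- (fmulX_S g), E.
  reflexivity.
Qed.

(* [fneg f] is [f(-x)] and [fhalf f] is [f(x/2)]. *)
Definition fneg (f : fser) : fser := fun n => (-1) ^ n * f n.
Definition fhalf (f : fser) : fser := fun n => (/2) ^ n * f n.

Lemma fneg_mul f g : fneg (fmul f g) = fmul (fneg f) (fneg g).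
Proof.
  apply functional_extensionality. intro n. unfold fneg, fmul. rewrite <- (fsum_mull RTheory).
  apply fsum_ext. intros k Hk. replace n with (k + (n - k))%nat at 1 by lia. rewrite pow_add. ring.
Qed.

Lemma fhalf_mul f g : fhalf (fmul f g) = fmul (fhalf f) (fhalf g).
Proof.
  apply functional_extensionality. intro n. unfold fhalf, fmul. rewrite <- (fsum_mull RTheory).
  apply fsum_ext. intros k Hk. replace n with (k + (n - k))%nat at 1 by lia. rewrite pow_add. ring.
Qed.

Lemma fneg_one : fneg fone = fone.
Proof. apply functional_extensionality. intros [|n]; unfold fneg, fone; simpl; ring. Qed.

Lemma fhalf_add f g : fhalf (fadd f g) = fadd (fhalf f) (fhalf g).
Proof. apply functional_extensionality. intro n. unfold fhalf, fadd. ring. Qed.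

Lemma fX_halves : fX = fadd (fhalf fX) (fhalf fX).
Proof. apply functional_extensionality. intros [|[|n]]; unfold fadd, fhalf, fX; simpl; field. Qed.

(* [fexp c] is [e^(c x)]. *)
Definition fexp (c : R) : fser := fun n => c ^ n / INR (fact n).

Lemma fexp_add c d : fmul (fexp c) (fexp d) = fexp (c + d).
Proof.
  apply functional_extensionality. intro n. unfold fmul, fexp.
  rewrite <- sum_binomial. unfold Rdiv. rewrite <- (fsum_mulr RTheory). apply fsum_ext. intros k Hk.
  unfold Binomial.C. pose proof (INR_fact_neq_0 k). pose proof (INR_fact_neq_0 (n - k)).
  pose proof (INR_fact_neq_0 n). field. auto.
Qed.

Lemma fexp_0 : fexp 0 = fone.
Proof.
  apply functional_extensionality. intros [|n];
  unfold fexp, fone; simpl; [field | unfold Rdiv; ring].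
Qed.

Lemma fhalf_fexp2 : fhalf (fexp 2) = fexp 1.
Proof.
  apply functional_extensionality. intro n. unfold fhalf, fexp.
  rewrite pow1. unfold Rdiv. rewrite <- Rmult_assoc, <- Rpow_mult_distr, Rinv_l, pow1 by lra. ring.
Qed.

Lemma bern_upto_length n : length (bern_upto n) = S n.
Proof. induction n as [|n IH]; [reflexivity|].
  simpl bern_upto. rewrite length_app, IH. simpl. lia. Qed.

Lemma nth_bern_upto n k : (k <= n)%nat -> nth k (bern_upto n) 0 = bernoulli k.
Proof.
  induction n as [|n IH]; intros Hk.
  - replace k with 0%nat by lia. reflexivity.
  - destruct (Nat.eq_dec k (S n)) as [->|Hne]; [reflexivity|].
    simpl bern_upto. rewrite app_nth1 by (rewrite bern_upto_length; lia). apply IH. lia.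
Qed.

Lemma bernoulli_S m :
  bernoulli (S m) = - / INR (S (S m)) * sumR (S m) (fun k => Binomial.C (S (S m)) k * bernoulli k).
Proof.
  unfold bernoulli at 1.
  change (bern_upto (S m)) with (bern_upto m ++
    [- / INR (S (S m)) * sumR (S m) (fun k => Binomial.C (S (S m)) k * nth k (bern_upto m) 0)]).
  rewrite app_nth2 by (rewrite bern_upto_length; lia). rewrite bern_upto_length, Nat.sub_diag.
  cbn [nth]. f_equal. apply fsum_ext. intros k Hk. rewrite nth_bern_upto by lia. reflexivity.
Qed.

Lemma binomial_S_n n : Binomial.C (S n) n = INR (S n).
Proof.
  unfold Binomial.C. replace (S n - n)%nat with 1%nat by lia.
  rewrite fact_simpl, mult_INR. pose proof (INR_fact_neq_0 n). simpl (fact 1).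
  change (INR 1) with 1. field. exact H.
Qed.

Lemma bernoulli_recursion m :
  sumR (S (S m)) (fun k => Binomial.C (S (S m)) k * bernoulli k) = 0.
Proof.
  rewrite (fsum_S RTheory), binomial_S_n, bernoulli_S.
  assert (H : INR (S (S m)) <> 0) by (apply not_0_INR; lia). field. exact H.
Qed.

(* [fexpm1_div] is [(e^x - 1)/x] and [fbern] is [x/(e^x - 1)]. *)
Definition fexpm1_div : fser := fun n => / INR (fact (S n)).
Definition fbern : fser := fun n => bernoulli n / INR (fact n).

Lemma fbern_mul_fexpm1_div : fmul fbern fexpm1_div = fone.
Proof.
  apply functional_extensionality. intros [|n].
  - unfold fmul, fsum, fbern, fexpm1_div, fone. simpl. unfold bernoulli. simpl. field.
  - unfold fmul, fone. simpl Nat.eqb.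
    rewrite (fsum_ext _ _
      (fun k => / INR (fact (S (S n))) * (Binomial.C (S (S n)) k * bernoulli k))).
    + rewrite (fsum_mull RTheory), bernoulli_recursion. ring.
    + intros k Hk. unfold fbern, fexpm1_div, Binomial.C.
      replace (fact (S (S n) - k)) with (fact (S (S n - k))) by (f_equal; lia).
      pose proof (INR_fact_neq_0 k). pose proof (INR_fact_neq_0 (S (S n - k))).
      pose proof (INR_fact_neq_0 (S (S n))). field. auto.
Qed.

Lemma fX_mul_fexpm1_div : fmul fX fexpm1_div = fsub (fexp 1) fone.
Proof.
  apply functional_extensionality. intros [|n].
  - rewrite fmulX_0. unfold fsub, fexp, fone. simpl. field.
  - rewrite fmulX_S. unfold fsub, fexp, fone, fexpm1_div. simpl Nat.eqb.
    rewrite pow1. unfold Rdiv. ring.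
Qed.

(* Read off the coefficient of [x^(n+1)] in [e^(-x) e^x = 1]. *)
Lemma fexp_neg1_mul_fexpm1_div : fmul (fexp (-1)) fexpm1_div = fneg fexpm1_div.
Proof.
  apply functional_extensionality. intro n.
  assert (H : fmul (fexp (-1)) (fexp 1) (S n) = 0).
  { rewrite fexp_add. replace (-1 + 1) with 0 by ring.
    unfold fexp. rewrite pow_i by lia. unfold Rdiv. ring. }
  unfold fmul in H. rewrite (fsum_S RTheory), Nat.sub_diag in H.
  unfold fmul, fneg, fexpm1_div.
  rewrite (fsum_ext (S n) _ (fun k => fexp (-1) k * fexp 1 (S n - k)%nat)).
  - assert (E : fexp (-1) (S n) * fexp 1 0%nat = - ((-1) ^ n * / INR (fact (S n)))).
    { unfold fexp. rewrite pow_O, <- tech_pow_Rmult. simpl (INR (fact 0)). unfold Rdiv.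
      rewrite Rinv_1. ring. }
    lra.
  - intros k Hk. f_equal. unfold fexp. rewrite pow1.
    replace (S n - k)%nat with (S (n - k)) by lia. unfold Rdiv. ring.
Qed.

Lemma fneg_fbern_mul_fexpm1_div : fmul (fneg fbern) fexpm1_div = fexp 1.
Proof.
  assert (Hneg : fmul (fneg fbern) (fneg fexpm1_div) = fone)
    by (rewrite <- fneg_mul, fbern_mul_fexpm1_div; apply fneg_one).
  assert (Hinv : fmul (fexp 1) (fexp (-1)) = fone)
    by (rewrite fexp_add, Rplus_opp_r; apply fexp_0).
  transitivity (fmul (fmul (fneg fbern) fexpm1_div) (fmul (fexp 1) (fexp (-1)))).
  - rewrite Hinv. ring.
  - transitivity (fmul (fexp 1) (fmul (fneg fbern) (fmul (fexp (-1)) fexpm1_div))); [ring|].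
    rewrite fexp_neg1_mul_fexpm1_div, Hneg. ring.
Qed.

(* Both sides are inverse to [(e^x - 1)/x]. *)
Lemma fneg_fbern : fsub (fneg fbern) fX = fbern.
Proof.
  set (g := fsub (fneg fbern) fX).
  assert (Hg : fmul g fexpm1_div = fone).
  { transitivity (fsub (fmul (fneg fbern) fexpm1_div) (fmul fX fexpm1_div)); [unfold g; ring|].
    rewrite fneg_fbern_mul_fexpm1_div, fX_mul_fexpm1_div. ring. }
  transitivity (fmul g (fmul fbern fexpm1_div)); [rewrite fbern_mul_fexpm1_div; ring|].
  transitivity (fmul fbern (fmul g fexpm1_div)); [ring|]. rewrite Hg. ring.
Qed.

Lemma pow_m1_odd n : Nat.odd n = true -> (-1) ^ n = -1.
Proof.
  intros Hn. apply Nat.odd_spec in Hn. destruct Hn as [k ->].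
  rewrite pow_add, pow_mult. replace ((-1) ^ 2) with 1 by ring. rewrite pow1. ring.
Qed.

Lemma bernoulli_odd n : Nat.odd n = true -> n <> 1%nat -> bernoulli n = 0.
Proof.
  intros Hodd Hn1. assert (H := f_equal (fun f => f n) fneg_fbern). cbv beta in H.
  unfold fsub, fneg, fX, fbern in H. rewrite pow_m1_odd in H by exact Hodd.
  replace (Nat.eqb n 1) with false in H by (symmetry; apply Nat.eqb_neq; exact Hn1).
  pose proof (INR_fact_neq_0 n). assert (E : bernoulli n / INR (fact n) = 0) by lra.
  apply Rmult_integral in E. destruct E as [E|E]; [exact E|].
  exfalso. exact (Rinv_neq_0_compat _ H0 E).
Qed.

Lemma fbern_mul_fexp1 : fmul fbern (fexp 1) = fadd fbern fX.
Proof.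
  transitivity (fadd fbern (fmul fX (fmul fbern fexpm1_div))).
  - replace (fexp 1) with (fadd fone (fmul fX fexpm1_div))
      by (rewrite fX_mul_fexpm1_div; ring). ring.
  - rewrite fbern_mul_fexpm1_div. ring.
Qed.

Lemma fbern_mul_fexp2 : fmul fbern (fexp 2) = fadd (fadd fbern fX) (fmul fX (fexp 1)).
Proof.
  transitivity (fmul (fmul fbern (fexp 1)) (fexp 1)).
  { rewrite <- fmul_assoc, fexp_add. replace (1 + 1) with 2 by ring. reflexivity. }
  rewrite fbern_mul_fexp1.
  transitivity (fadd (fmul fbern (fexp 1)) (fmul fX (fexp 1))); [ring|].
  rewrite fbern_mul_fexp1. reflexivity.
Qed.

Lemma fhalf_fbern_mul_fexp1 :
  fmul (fhalf fbern) (fexp 1) =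
  fadd (fadd (fhalf fbern) (fhalf fX)) (fmul (fhalf fX) (fhalf (fexp 1))).
Proof.
  rewrite <- fhalf_fexp2 at 1.
  rewrite <- fhalf_mul, fbern_mul_fexp2, !fhalf_add, fhalf_mul. reflexivity.
Qed.

Definition fxi : fser := fun n => if Nat.odd n then xi_neg n / INR (fact n) else 0.

(* Coefficientwise this is [xi(-r) = (2^-r - 1) zeta(-r)] and [zeta(-r) = -B_(r+1)/(r+1)],
   together with the vanishing of the odd Bernoulli numbers beyond [B_1]. *)
Lemma fX_mul_fxi : fmul fX fxi = fadd (fsub fbern (fadd (fhalf fbern) (fhalf fbern))) fone.
Proof.
  apply functional_extensionality. intros [|m].
  - rewrite fmulX_0. unfold fadd, fsub, fhalf, fbern, fone, bernoulli. simpl. field.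
  - rewrite fmulX_S. unfold fadd, fsub, fhalf, fbern, fone, fxi. simpl Nat.eqb.
    replace ((/ 2) ^ S m) with (/ 2 * (/ 2) ^ m) by reflexivity.
    pose proof (INR_fact_neq_0 m). pose proof (not_0_INR (S m) ltac:(lia)).
    rewrite fact_simpl, mult_INR.
    destruct (Nat.odd m) eqn:Hm.
    + unfold xi_neg, zeta_neg. rewrite pow_inv.
      field. repeat split; try assumption. apply pow_nonzero. lra.
    + destruct m as [|m].
      * simpl. field.
      * rewrite bernoulli_odd; [field; auto | | lia].
        rewrite Nat.odd_succ, <- Nat.negb_odd, Hm. reflexivity.
Qed.

Lemma fxi_mul_fexpm1 : fmul fxi (fsub (fexp 1) fone) = fsub fexpm1_div (fhalf (fexp 1)).
Proof.
  apply fmulX_inj.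
  transitivity (fmul (fmul fX fxi) (fsub (fexp 1) fone)); [ring|]. rewrite fX_mul_fxi.
  transitivity (fadd (fadd (fsub (fmul fbern (fexp 1)) fbern)
                           (fopp (fadd (fmul (fhalf fbern) (fexp 1))
                                        (fmul (fhalf fbern) (fexp 1)))))
                     (fadd (fadd (fhalf fbern) (fhalf fbern)) (fsub (fexp 1) fone))); [ring|].
  rewrite fbern_mul_fexp1, fhalf_fbern_mul_fexp1.
  transitivity (fsub (fsub (fexp 1) fone) (fmul fX (fhalf (fexp 1))));
    [|rewrite <- fX_mul_fexpm1_div; ring].
  set (h := fhalf fX). assert (E : fX = fadd h h) by apply fX_halves. rewrite E. ring.
Qed.

(* The coefficient of [x^i] in [fxi_mul_fexpm1], multiplied by [i!]. *)
Lemma xi_binomial_sum i :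
  sumR i (fun k => (if Nat.odd k then xi_neg k else 0) * Binomial.C i k) = / INR (S i) - (/ 2) ^ i.
Proof.
  assert (H := f_equal (fun f => f i) fxi_mul_fexpm1). cbv beta in H.
  unfold fmul, fsub, fone, fexp, fexpm1_div, fhalf in H.
  rewrite (fsum_S RTheory), Nat.sub_diag in H. simpl (Nat.eqb 0 0) in H.
  rewrite (fsum_ext i _ (fun k => fxi k * / INR (fact (i - k)))) in H.
  2:{ intros k Hk. replace (Nat.eqb (i - k) 0) with false by (symmetry; apply Nat.eqb_neq; lia).
      rewrite pow1. unfold Rdiv. ring. }
  assert (E : sumR i (fun k => fxi k * / INR (fact (i - k))) =
              / INR (fact (S i)) - (/ 2) ^ i / INR (fact i)).
  { rewrite !pow1 in H. simpl (INR (fact 0)) in H. unfold Rdiv in *. rewrite Rinv_1 in H.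
    apply (Rplus_eq_reg_r (fxi i * (1 * 1 - 1))). rewrite H. ring. }
  pose proof (INR_fact_neq_0 i). pose proof (not_0_INR (S i) ltac:(lia)).
  replace (/ INR (S i) - (/ 2) ^ i) with
    (INR (fact i) * (/ INR (fact (S i)) - (/ 2) ^ i / INR (fact i)))
    by (rewrite fact_simpl, mult_INR; field; auto).
  rewrite <- E, <- (fsum_mull RTheory). apply fsum_ext. intros k Hk. unfold fxi, Binomial.C.
  pose proof (INR_fact_neq_0 k). pose proof (INR_fact_neq_0 (i - k)).
  destruct (Nat.odd k); field; auto.
Qed.

(* [- c_minus 0] is the exponent of the factor split off from the transformed [n = 0] factor. *)
Lemma lincomb_tT_c_reg i :
  Cplus (lincomb c_reg tT i) (Copp (c_minus 0 i)) = Cplus (c_pref i) (c_reg i).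
Proof.
  set (cr k := if Nat.odd k then - xi_neg k else 0).
  assert (Ecr : forall k, c_reg k = RtoC (cr k))
    by (intro k; unfold c_reg, cr; destruct (Nat.odd k); reflexivity).
  rewrite lincomb_tT, (fsum_ext _ _ (fun k => RtoC (cr k * ((-1) ^ (i - k) * Binomial.C i k))))
    by (intros; rewrite Ecr, <- RtoC_mult; reflexivity).
  rewrite <- RtoC_sumR, Ecr. unfold c_minus, c_pref.
  rewrite <- RtoC_opp, <- !RtoC_plus. f_equal.
  rewrite (fsum_S RTheory), Nat.sub_diag, C_n_n.
  rewrite (fsum_ext i _
    (fun k => (-1) ^ i * ((if Nat.odd k then xi_neg k else 0) * Binomial.C i k))).
  - rewrite (fsum_mull RTheory), xi_binomial_sum.
    change (INR 0) with 0. change ((-1) ^ S i) with (-1 * (-1) ^ i).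
    rewrite Rplus_0_l, pow_O. set (h := (/ 2) ^ i). set (s := (-1) ^ i).
    assert (H : INR (S i) <> 0) by (apply not_0_INR; lia). field. exact H.
  - intros k Hk. unfold cr. destruct (Nat.odd k) eqn:Hodd; [|ring].
    replace ((-1) ^ i) with ((-1) ^ k * (-1) ^ (i - k)) by (rewrite <- pow_add; f_equal; lia).
    rewrite (pow_m1_odd k Hodd). ring.
Qed.

(** * The transformed partial products *)

Section TransformedProduct.
Variable z : C.

Definition pair_factor (L1 L2 : lin) : series :=
  smul (sadd sone (sexp z L1)) (sadd sone (sexp z L2)).

Definition tail_factor (N : nat) : series := pair_factor (c_minus N) (c_minus (S N)).

Lemma prod_factors_tvar_S N :
  at_tau1 z (prod_factors tvar (S N)) =
  smul (at_tau1 z (prod_factors tvar N)) (pair_factor (c_plus N) (c_minus N)).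
Proof. cbn [prod_factors]. rewrite at_tau1_mul, !lincomb_tvar. reflexivity. Qed.

Lemma sexp_opp_inv L : smul (sexp z (fun i => Copp (L i))) (sexp z L) = sone.
Proof.
  rewrite sexp_add, <- (sexp_zero z). f_equal.
  apply functional_extensionality. intro i. ring.
Qed.

Lemma prod_factors_tT_S N :
  at_tau1 z (prod_factors tT (S N)) =
  smul (sexp z (fun i => Copp (c_minus 0 i)))
    (smul (at_tau1 z (prod_factors tvar N)) (tail_factor N)).
Proof.
  induction N as [|N IH].
  - cbn [prod_factors]. rewrite !at_tau1_mul, !at_tau1_add, !at_tau1_one, !at_tau1_explin.
    rewrite lincomb_tT_c_plus_0, lincomb_tT_c_minus. unfold tail_factor, pair_factor.
    set (E := sexp z (fun i => Copp (c_minus 0 i))).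
    assert (Hinv : smul E (sexp z (c_minus 0)) = sone) by apply sexp_opp_inv.
    transitivity (smul (sadd (smul E (sexp z (c_minus 0))) E) (sadd sone (sexp z (c_minus 1))));
      [rewrite Hinv; ring | ring].
  - change (prod_factors tT (S (S N))) with
      (fps_mul (prod_factors tT (S N))
         (fps_mul (fps_add fps_one (fps_explin (lincomb (c_plus (S N)) tT)))
                  (fps_add fps_one (fps_explin (lincomb (c_minus (S N)) tT))))).
    rewrite at_tau1_mul, IH, !at_tau1_mul, !at_tau1_add, !at_tau1_one, !at_tau1_explin.
    rewrite lincomb_tT_c_plus_S, lincomb_tT_c_minus, prod_factors_tvar_S.
    unfold tail_factor, pair_factor. ring.
Qed.

Lemma Omega_partial_tT_S N :
  at_tau1 z (Omega_partial tT (S N)) =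
  smul (at_tau1 z (fps_mul prefactor (Omega_partial tvar N))) (tail_factor N).
Proof.
  unfold Omega_partial, prefactor. rewrite !at_tau1_mul, prod_factors_tT_S, !at_tau1_explin.
  rewrite lincomb_tvar.
  transitivity (smul (smul (sexp z (lincomb c_reg tT)) (sexp z (fun i => Copp (c_minus 0 i))))
                     (smul (at_tau1 z (prod_factors tvar N)) (tail_factor N))); [ring|].
  rewrite sexp_add.
  replace (fun i => Cplus (lincomb c_reg tT i) (Copp (c_minus 0 i)))
    with (fun i => Cplus (c_pref i) (c_reg i))
    by (apply functional_extensionality; intro i; symmetry; apply lincomb_tT_c_reg).
  rewrite <- sexp_add, lincomb_tvar. ring.
Qed.

End TransformedProduct.

(** * Estimates *)

(* Only coefficients below [a] enter the coefficient [a] of a product, which makes this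
   seminorm submultiplicative. *)
Definition boxnorm (a : list nat) (f : series) : R :=
  fold_right Rplus 0 (map (fun b => Cmod (f b)) (subidx a)).

Lemma boxnorm_nil f : boxnorm [] f = Cmod (f []).
Proof. unfold boxnorm. simpl. ring. Qed.

Lemma boxnorm_cons x s f : boxnorm (x :: s) f = sumR (S x) (fun y => boxnorm s (slice f y)).
Proof.
  unfold boxnorm at 1. cbn [subidx]. rewrite (fold_add_flat_map RTheory).
  apply fsum_ext. intros y _. unfold boxnorm. rewrite map_map. reflexivity.
Qed.

Lemma boxnorm_ge0 a f : 0 <= boxnorm a f.
Proof.
  unfold boxnorm. induction (subidx a) as [|b l IH]; simpl; [lra|].
  pose proof (Cmod_ge_0 (f b)). lra.
Qed.

Lemma Cmod_le_boxnorm a f : Cmod (f a) <= boxnorm a f.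
Proof.
  revert f. induction a as [|x s IH]; intro f.
  - rewrite boxnorm_nil. lra.
  - rewrite boxnorm_cons. apply Rle_trans with (boxnorm s (slice f x)); [apply (IH (slice f x))|].
    apply (term_le_sumR _ (fun y => boxnorm s (slice f y))); [lia | intro; apply boxnorm_ge0].
Qed.

Lemma boxnorm_add a f g : boxnorm a (sadd f g) <= boxnorm a f + boxnorm a g.
Proof.
  unfold boxnorm, sadd. induction (subidx a) as [|b l IH]; simpl; [lra|].
  pose proof (Cmod_triangle (f b) (g b)). lra.
Qed.

Lemma boxnorm_scale a c f : boxnorm a (sscale c f) = Cmod c * boxnorm a f.
Proof.
  unfold boxnorm, sscale. induction (subidx a) as [|b l IH]; simpl; [ring|].
  rewrite IH, Cmod_mult. ring.
Qed.

Lemma boxnorm_zero a : boxnorm a szero = 0.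
Proof.
  unfold boxnorm, szero. induction (subidx a) as [|b l IH]; simpl; [reflexivity|].
  rewrite IH, Cmod_0. ring.
Qed.

Lemma boxnorm_sum s n (F : nat -> series) :
  boxnorm s (fun t => sumC n (fun u => F u t)) <= sumR n (fun u => boxnorm s (F u)).
Proof.
  induction n as [|n IH].
  - change (fun t => sumC 0 (fun u => F u t)) with szero. rewrite boxnorm_zero. apply Rle_refl.
  - rewrite (fsum_S RTheory).
    apply Rle_trans with (boxnorm s (sadd (fun t => sumC n (fun u => F u t)) (F n))).
    + right. f_equal. apply functional_extensionality. intro t. apply (fsum_S C_ring_theory).
    + pose proof (boxnorm_add s (fun t => sumC n (fun u => F u t)) (F n)). lra.
Qed.

Lemma boxnorm_mul a f g : boxnorm a (smul f g) <= boxnorm a f * boxnorm a g.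
Proof.
  revert f g. induction a as [|x s IH]; intros f g.
  - rewrite !boxnorm_nil, smul_nil, Cmod_mult. lra.
  - rewrite !boxnorm_cons, (fsum_ext _ _ _ (fun y _ => f_equal (boxnorm s) (slice_smul f g y))).
    apply Rle_trans with
      (sumR (S x) (fun y => sumR (S y)
        (fun u => boxnorm s (slice f u) * boxnorm s (slice g (y - u))))).
    { apply sumR_le. intros y _. eapply Rle_trans; [apply boxnorm_sum|].
      apply sumR_le. intros u _. apply IH. }
    rewrite (fsum_triangle RTheory x
      (fun u y => boxnorm s (slice f u) * boxnorm s (slice g (y - u)))).
    rewrite <- (fsum_mulr RTheory). apply sumR_le. intros u Hu.
    rewrite (fsum_ext _ _ (fun k => boxnorm s (slice f u) * boxnorm s (slice g k)))
      by (intros; do 3 f_equal; lia).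
    rewrite (fsum_mull RTheory). apply Rmult_le_compat_l; [apply boxnorm_ge0|].
    apply sumR_mono_n; [lia | intro; apply boxnorm_ge0].
Qed.

Lemma boxnorm_one a : boxnorm a sone = 1.
Proof.
  induction a as [|x s IH].
  - rewrite boxnorm_nil. apply Cmod_1.
  - rewrite boxnorm_cons, fsum_Sl, slice_sone_0, IH, (fsum_eq0 RTheory); [ring|].
    intros k _. rewrite slice_sone_S. apply boxnorm_zero.
Qed.

Lemma sumR_pow_le y x : 1 <= y -> sumR (S x) (fun k => y ^ k) <= (2 * y) ^ x.
Proof.
  intros Hy. induction x as [|x IH].
  - unfold fsum. simpl. lra.
  - rewrite (fsum_S RTheory), Rpow_mult_distr. rewrite Rpow_mult_distr in IH.
    assert (y ^ x <= y ^ S x) by (apply Rle_pow; [lra | lia]).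
    assert (1 <= 2 ^ x) by (apply pow_R1_Rle; lra).
    assert (0 <= y ^ S x) by (apply pow_le; lra).
    assert (2 ^ x * y ^ x <= 2 ^ x * y ^ S x) by (apply Rmult_le_compat_l; lra).
    simpl (2 ^ S x). nra.
Qed.

Lemma boxnorm_factorized_le a phi y :
  1 <= y -> (forall j k, (j < length a)%nat -> Cmod (phi j k) <= y ^ k) ->
  boxnorm a (factorized phi) <= (2 * y) ^ (list_sum a).
Proof.
  revert phi. induction a as [|x s IH]; intros phi Hy Hphi.
  - rewrite boxnorm_nil. unfold factorized, cprod. simpl. rewrite Cmod_1. lra.
  - rewrite boxnorm_cons. simpl list_sum. rewrite pow_add.
    rewrite (fsum_ext _ _
      (fun k => Cmod (phi 0%nat k) * boxnorm s (factorized (fun j => phi (S j)))))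
      by (intros; rewrite slice_factorized, boxnorm_scale; reflexivity).
    rewrite (fsum_mulr RTheory). apply Rmult_le_compat.
    + apply sumR_ge0. intros; apply Cmod_ge_0.
    + apply boxnorm_ge0.
    + eapply Rle_trans; [|apply (sumR_pow_le y x Hy)].
      apply sumR_le. intros k _. apply Hphi. simpl. lia.
    + apply IH; [exact Hy|]. intros j k Hj. apply Hphi. simpl. lia.
Qed.

Lemma exp_le_compat x y : x <= y -> exp x <= exp y.
Proof. intros [Hlt|Heq]; [left; apply exp_increasing, Hlt | right; rewrite Heq; reflexivity]. Qed.

Lemma exp_mul_INR x n : exp (x * INR n) = exp x ^ n.
Proof.
  induction n as [|n IH]; [simpl; rewrite Rmult_0_r; apply exp_0|].
  rewrite S_INR, Rmult_plus_distr_l, Rmult_1_r, exp_plus, IH. simpl. ring.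
Qed.

Lemma pow_div_fact_le_exp x D : 0 <= x -> x ^ D / INR (fact D) <= exp x.
Proof.
  intros Hx. eapply Rle_trans; [|apply (exp_ge_taylor x D Hx)].
  destruct D as [|D]; [simpl; lra|]. rewrite tech5.
  assert (0 <= sum_f_R0 (fun k => x ^ k / INR (fact k)) D); [|lra].
  apply cond_pos_sum. intros k. apply Rmult_le_pos; [apply pow_le, Hx|].
  apply Rlt_le, Rinv_0_lt_compat, INR_fact_lt_0.
Qed.

Lemma pow_le_exp x t D : 0 <= x -> 0 < t -> x ^ D <= INR (fact D) / t ^ D * exp (t * x).
Proof.
  intros Hx Ht. pose proof (pow_div_fact_le_exp (t * x) D ltac:(nra)) as H.
  pose proof (INR_fact_lt_0 D). assert (0 < t ^ D) by (apply pow_lt, Ht).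
  rewrite Rpow_mult_distr in H. unfold Rdiv in *.
  apply (Rmult_le_reg_l (t ^ D * / INR (fact D))); [apply Rmult_lt_0_compat; auto with real|].
  replace (t ^ D * / INR (fact D) * (INR (fact D) * / t ^ D * exp (t * x))) with (exp (t * x))
    by (field; lra). lra.
Qed.

Lemma Cmod_cexp w : Cmod (cexp w) = exp (fst w).
Proof.
  destruct w as [x y]. unfold Cmod, cexp. simpl fst; simpl snd.
  replace ((exp x * cos y) ^ 2 + (exp x * sin y) ^ 2) with (exp x ^ 2).
  - apply sqrt_pow2, Rlt_le, exp_pos.
  - rewrite <- (Rmult_1_r (exp x ^ 2)) at 1. rewrite <- (sin2_cos2 y). unfold Rsqr. ring.
Qed.

Lemma Cmod_two_pi_i : Cmod two_pi_i = 2 * PI.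
Proof.
  unfold Cmod, two_pi_i. simpl fst; simpl snd.
  replace (0 ^ 2 + (2 * PI) ^ 2) with ((2 * PI) ^ 2) by ring.
  apply sqrt_pow2. pose proof PI_RGT_0. lra.
Qed.

Lemma Cmod_expcoef_le w k : Cmod (expcoef w k) <= Cmod w ^ k.
Proof.
  unfold expcoef. rewrite Cmod_div by apply RtoC_INR_fact_neq0.
  replace (Cmod (cpow w k)) with (Cmod w ^ k) by (symmetry; apply Cmod_pow).
  rewrite Cmod_R, Rabs_pos_eq by apply pos_INR.
  assert (1 <= INR (fact k)) by (apply (le_INR 1), lt_O_fact).
  unfold Rdiv. rewrite <- (Rmult_1_r (Cmod w ^ k)) at 2. apply Rmult_le_compat_l.
  - apply pow_le, Cmod_ge_0.
  - rewrite <- Rinv_1. apply Rinv_le_contravar; lra.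
Qed.

Definition decay (y : R) : R := exp (- (PI * y)).
Definition degree (a : list nat) : nat := length a * list_sum a.
(* [32 = 2 * 16]: [|2 pi i L_j| <= 16 (N + 2)^(length a)] as [pi <= 4], and summing the powers
   costs a factor [2]; the rest bounds [(N + 2)^(degree a)] by [e^(pi y (N + 2))]. *)
Definition exp_const (a : list nat) (y : R) : R :=
  32 ^ list_sum a * (INR (fact (degree a)) / (PI * y) ^ degree a) * exp (2 * PI * y).

Lemma boxnorm_exp_factor_le a N (l : nat -> R) :
  (forall j, Rabs (l j) <= 2 * (INR N + 2) ^ j) ->
  boxnorm a (factorized (exp_factor (fun j => RtoC (l j))))
    <= 32 ^ list_sum a * (INR N + 2) ^ degree a.
Proof.
  intros Hl. pose proof PI_4. pose proof (pos_INR N).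
  set (Y := 16 * (INR N + 2) ^ length a).
  assert (HY : 1 <= Y)
    by (assert (1 <= (INR N + 2) ^ length a) by (apply pow_R1_Rle; lra); unfold Y; lra).
  replace (32 ^ list_sum a * (INR N + 2) ^ degree a) with ((2 * Y) ^ list_sum a)
    by (unfold Y, degree; rewrite <- Rmult_assoc, Rpow_mult_distr, pow_mult; f_equal; ring).
  apply boxnorm_factorized_le; [exact HY|]. intros j k Hj. unfold exp_factor.
  destruct (Nat.eqb j 1).
  - destruct k as [|k]; simpl; [rewrite Cmod_1; lra|].
    rewrite Cmod_0. apply Rmult_le_pos; [lra | apply pow_le; lra].
  - eapply Rle_trans; [apply Cmod_expcoef_le|]. apply pow_incr. split; [apply Cmod_ge_0|].
    rewrite Cmod_mult, Cmod_two_pi_i, Cmod_R.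
    assert ((INR N + 2) ^ j <= (INR N + 2) ^ length a) by (apply Rle_pow; lra || lia).
    specialize (Hl j). pose proof (Rabs_pos (l j)). unfold Y. nra.
Qed.

Lemma sexp_boxnorm_le a z N (l : nat -> R) :
  0 < Im z -> (forall j, Rabs (l j) <= 2 * (INR N + 2) ^ j) -> INR N <= l 1%nat ->
  boxnorm a (sexp z (fun j => RtoC (l j))) <= exp_const a (Im z) * decay (Im z) ^ N.
Proof.
  intros Hy Hl H1. pose proof PI_RGT_0. pose proof (pos_INR N).
  set (y := Im z) in *.
  assert (Hfst : fst (Cmult two_pi_i (Cmult (RtoC (l 1%nat)) z)) = - (2 * PI * l 1%nat * y))
    by (unfold y, two_pi_i; destruct z; simpl; ring).
  rewrite sexp_factorized, boxnorm_scale, Cmod_cexp, Hfst.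
  pose proof (boxnorm_exp_factor_le a N l Hl) as HF.
  pose proof (pow_le_exp (INR N + 2) (PI * y) (degree a) ltac:(lra) ltac:(nra)) as HP.
  assert (Hdecay : exp (- (2 * PI * l 1%nat * y)) * exp (PI * y * (INR N + 2))
                   <= exp (2 * PI * y) * decay y ^ N).
  { unfold decay. rewrite <- exp_mul_INR, <- !exp_plus. apply exp_le_compat.
    assert (0 <= (l 1%nat - INR N) * (PI * y)) by (apply Rmult_le_pos; nra). nra. }
  assert (0 <= INR (fact (degree a)) / (PI * y) ^ degree a)
    by (apply Rlt_le, Rdiv_lt_0_compat; [apply INR_fact_lt_0 | apply pow_lt; nra]).
  assert (0 <= 32 ^ list_sum a) by (apply pow_le; lra).
  pose proof (exp_pos (- (2 * PI * l 1%nat * y))). pose proof (exp_pos (PI * y * (INR N + 2))).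
  eapply Rle_trans; [apply Rmult_le_compat_l; [lra | exact HF]|].
  eapply Rle_trans; [apply Rmult_le_compat_l; [lra|]; apply Rmult_le_compat_l; [lra | exact HP]|].
  unfold exp_const. fold y.
  set (c := INR (fact (degree a)) / (PI * y) ^ degree a) in *.
  replace (exp (- (2 * PI * l 1%nat * y)) * (32 ^ list_sum a * (c * exp (PI * y * (INR N + 2)))))
    with (32 ^ list_sum a * c * (exp (- (2 * PI * l 1%nat * y)) * exp (PI * y * (INR N + 2))))
    by ring.
  apply Rle_trans with (32 ^ list_sum a * c * (exp (2 * PI * y) * decay y ^ N)); [|right; ring].
  apply Rmult_le_compat_l; [nra | exact Hdecay].
Qed.

(** * Convergence *)

Lemma filterlim_C_eps (v : nat -> C) (l : C) :
  filterlim v eventually (locally l) <->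
  forall eps, 0 < eps -> exists N0, forall n, (N0 <= n)%nat -> Cmod (Cminus (v n) l) < eps.
Proof.
  split.
  - intros H eps Heps.
    assert (Hl : locally l (fun w => Cmod (Cminus w l) < eps)).
    { apply (locally_le_locally_norm (K := C_AbsRing) (V := C_NormedModule)).
      exists (mkposreal eps Heps). intros w Hw. exact Hw. }
    destruct (H _ Hl) as [N0 HN0]. exists N0. exact HN0.
  - intros H P HP.
    destruct (locally_norm_le_locally (K := C_AbsRing) (V := C_NormedModule) l P HP) as [eps Heps].
    destruct (H eps (cond_pos eps)) as [N0 HN0]. exists N0. intros n Hn.
    apply Heps. apply HN0, Hn.
Qed.

Lemma filterlim_S {T : Type} (v : nat -> T) (F : (T -> Prop) -> Prop) :
  filterlim (fun n => v (S n)) eventually F -> filterlim v eventually F.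
Proof.
  intros H P HP. destruct (H P HP) as [N0 HN0]. exists (S N0). intros [|n] Hn; [lia|].
  apply HN0. lia.
Qed.

Lemma filterlim_C_of_summable_steps (u : nat -> C) (w : nat -> R) :
  ex_series w -> (forall N, Cmod (Cminus (u (S N)) (u N)) <= w N) ->
  exists l, filterlim u eventually (locally l).
Proof.
  intros Hw Hstep.
  assert (Hs : ex_series (V := C_CompleteNormedModule) (fun N => Cminus (u (S N)) (u N)))
    by (apply (ex_series_le _ w); auto).
  destruct Hs as [L HL]. exists (Cplus (u 0%nat) L).
  assert (Htel : forall N, sum_n (fun N => Cminus (u (S N)) (u N)) N = Cminus (u (S N)) (u 0%nat)).
  { induction N as [|N IH]; [rewrite sum_O; reflexivity|].
    rewrite sum_Sn, IH. change (Cplus (Cminus (u (S N)) (u 0%nat)) (Cminus (u (S (S N))) (u (S N)))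
                                = Cminus (u (S (S N))) (u 0%nat)). ring. }
  apply filterlim_S, filterlim_C_eps. intros eps Heps.
  destruct (proj1 (filterlim_C_eps _ _) HL eps Heps) as [N0 HN0]. exists N0. intros n Hn.
  specialize (HN0 n Hn). rewrite Htel in HN0.
  replace (Cminus (u (S n)) (Cplus (u 0%nat) L)) with (Cminus (Cminus (u (S n)) (u 0%nat)) L)
    by ring. exact HN0.
Qed.

Lemma filterlim_C_close (u v : nat -> C) (e : nat -> R) (l : C) :
  filterlim u eventually (locally l) -> (forall n, Cmod (Cminus (v n) (u n)) <= e n) ->
  is_lim_seq e 0 -> filterlim v eventually (locally l).
Proof.
  intros Hu Hvu He. apply filterlim_C_eps. intros eps Heps.
  destruct (proj1 (filterlim_C_eps _ _) Hu (eps / 2) ltac:(lra)) as [N1 H1].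
  destruct (proj2 (is_lim_seq_spec e 0) He (mkposreal (eps / 2) ltac:(lra))) as [N2 H2].
  exists (max N1 N2). intros n Hn.
  replace (Cminus (v n) l) with (Cplus (Cminus (v n) (u n)) (Cminus (u n) l)) by ring.
  eapply Rle_lt_trans; [apply Cmod_triangle|].
  specialize (H1 n ltac:(lia)). specialize (H2 n ltac:(lia)). specialize (Hvu n).
  simpl in H2. rewrite Rminus_0_r in H2. pose proof (Rle_abs (e n)). lra.
Qed.

Section Convergence.
Variables (a : list nat) (z : C).
Hypothesis Hy : 0 < Im z.

Definition factor_err (N : nat) : R := exp_const a (Im z) * decay (Im z) ^ N.

Lemma decay_bounds : 0 < decay (Im z) < 1.
Proof.
  unfold decay. split; [apply exp_pos|]. rewrite <- exp_0. apply exp_increasing.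
  pose proof PI_RGT_0. nra.
Qed.

Lemma exp_const_ge0 : 0 <= exp_const a (Im z).
Proof.
  unfold exp_const. pose proof PI_RGT_0.
  apply Rmult_le_pos; [apply Rmult_le_pos|].
  - apply pow_le. lra.
  - apply Rlt_le, Rdiv_lt_0_compat; [apply INR_fact_lt_0 | apply pow_lt; nra].
  - apply Rlt_le, exp_pos.
Qed.

Lemma sumR_factor_err_le N : sumR N factor_err <= exp_const a (Im z) / (1 - decay (Im z)).
Proof.
  pose proof decay_bounds. pose proof exp_const_ge0.
  assert (Hgeom : sumR N factor_err * (1 - decay (Im z))
              = exp_const a (Im z) * (1 - decay (Im z) ^ N)).
  { induction N as [|N IH]; [unfold fsum; simpl; ring|].
    rewrite (fsum_S RTheory), Rmult_plus_distr_r, IH. unfold factor_err. simpl. ring. }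
  apply (Rmult_le_reg_r (1 - decay (Im z))); [lra|]. rewrite Hgeom.
  unfold Rdiv. rewrite Rmult_assoc, Rinv_l, Rmult_1_r by lra.
  assert (0 <= decay (Im z) ^ N) by (apply pow_le; lra). nra.
Qed.

Lemma ex_series_factor_err c : ex_series (fun N => c * factor_err N).
Proof.
  pose proof decay_bounds.
  assert (Hg : ex_series (fun N => decay (Im z) ^ N))
    by (eexists; apply is_series_geom; rewrite Rabs_pos_eq; lra).
  apply (ex_series_scal_l (c * exp_const a (Im z))) in Hg.
  eapply ex_series_ext; [|exact Hg]. intro N. unfold factor_err.
  change (c * exp_const a (Im z) * decay (Im z) ^ N = c * (exp_const a (Im z) * decay (Im z) ^ N)).
  ring.
Qed.

Lemma is_lim_seq_factor_err c : is_lim_seq (fun N => c * factor_err N) 0.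
Proof.
  pose proof decay_bounds.
  assert (Hg : is_lim_seq (fun N => decay (Im z) ^ N) 0)
    by (apply is_lim_seq_geom; rewrite Rabs_pos_eq; lra).
  apply (is_lim_seq_scal_l _ (c * exp_const a (Im z))) in Hg.
  replace (Rbar_mult (c * exp_const a (Im z)) 0) with (Finite 0) in Hg by (simpl; f_equal; ring).
  eapply is_lim_seq_ext; [|exact Hg]. intro N. unfold factor_err. simpl. ring.
Qed.

Lemma Rabs_scaled_pow_le N s j x :
  Rabs s <= 1 -> 0 <= x <= INR N + 2 -> Rabs (s * x ^ j) <= (INR N + 2) ^ j.
Proof.
  intros Hs Hx. rewrite Rabs_mult, <- RPow_abs.
  assert (Rabs x ^ j <= (INR N + 2) ^ j) by (apply pow_incr; rewrite Rabs_pos_eq; lra).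
  pose proof (Rabs_pos s). pose proof (pow_le (Rabs x) j (Rabs_pos x)). nra.
Qed.

(* The exponentials in the factors [N] and [N + 1] all have exponents of this shape. *)
Lemma sexp_pow_sum_le N (s1 s2 : nat -> R) x1 x2 :
  (forall j, Rabs (s1 j) <= 1) -> (forall j, Rabs (s2 j) <= 1) ->
  0 <= x1 <= INR N + 2 -> 0 <= x2 <= INR N + 2 -> INR N <= s1 1%nat * x1 + s2 1%nat * x2 ->
  boxnorm a (sexp z (fun j => RtoC (s1 j * x1 ^ j + s2 j * x2 ^ j))) <= factor_err N.
Proof.
  intros Hs1 Hs2 Hx1 Hx2 H1. apply sexp_boxnorm_le; [exact Hy | | simpl; lra].
  intros j. eapply Rle_trans; [apply Rabs_triang|].
  pose proof (Rabs_scaled_pow_le N (s1 j) j x1 (Hs1 j) Hx1).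
  pose proof (Rabs_scaled_pow_le N (s2 j) j x2 (Hs2 j) Hx2). lra.
Qed.

Lemma pair_factor_sub1_le N L1 L2 :
  boxnorm a (sexp z L1) <= factor_err N -> boxnorm a (sexp z L2) <= factor_err N ->
  boxnorm a (sexp z (fun i => Cplus (L1 i) (L2 i))) <= factor_err N ->
  boxnorm a (ssub (pair_factor z L1 L2) sone) <= 3 * factor_err N.
Proof.
  intros H1 H2 H12. unfold pair_factor.
  replace (ssub (smul (sadd sone (sexp z L1)) (sadd sone (sexp z L2))) sone)
    with (sadd (sadd (sexp z L1) (sexp z L2)) (smul (sexp z L1) (sexp z L2))) by ring.
  rewrite sexp_add. eapply Rle_trans; [apply boxnorm_add|].
  pose proof (boxnorm_add a (sexp z L1) (sexp z L2)). lra.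
Qed.

Lemma step_factor_sub1_le N :
  boxnorm a (ssub (pair_factor z (c_plus N) (c_minus N)) sone) <= 3 * factor_err N.
Proof.
  pose proof (pos_INR N).
  apply pair_factor_sub1_le.
  - replace (c_plus N) with (fun j => RtoC (1 * (INR N + /2) ^ j + 0 * (INR N + /2) ^ j))
      by (apply functional_extensionality; intro; unfold c_plus; cbv beta; f_equal; ring).
    apply sexp_pow_sum_le; intros; rewrite ?Rabs_R1, ?Rabs_R0, ?pow_1_abs; simpl pow; lra.
  - replace (c_minus N) with (fun j => RtoC ((-1) ^ S j * (INR N + /2) ^ j + 0 * (INR N + /2) ^ j))
      by (apply functional_extensionality; intro; unfold c_minus; cbv beta; f_equal; ring).
    apply sexp_pow_sum_le; intros; rewrite ?Rabs_R1, ?Rabs_R0, ?pow_1_abs; simpl pow; lra.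
  - replace (fun i => Cplus (c_plus N i) (c_minus N i))
      with (fun j => RtoC (1 * (INR N + /2) ^ j + (-1) ^ S j * (INR N + /2) ^ j))
      by (apply functional_extensionality; intro; unfold c_plus, c_minus; cbv beta;
          rewrite <- RtoC_plus; f_equal; ring).
    apply sexp_pow_sum_le; intros; rewrite ?Rabs_R1, ?Rabs_R0, ?pow_1_abs; simpl pow; lra.
Qed.

Lemma tail_factor_sub1_le N : boxnorm a (ssub (tail_factor z N) sone) <= 3 * factor_err N.
Proof.
  pose proof (pos_INR N). pose proof (S_INR N).
  apply pair_factor_sub1_le.
  - replace (c_minus N) with (fun j => RtoC ((-1) ^ S j * (INR N + /2) ^ j + 0 * (INR N + /2) ^ j))
      by (apply functional_extensionality; intro; unfold c_minus; cbv beta; f_equal; ring).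
    apply sexp_pow_sum_le; intros; rewrite ?Rabs_R1, ?Rabs_R0, ?pow_1_abs; simpl pow; lra.
  - replace (c_minus (S N)) with
      (fun j => RtoC ((-1) ^ S j * (INR (S N) + /2) ^ j + 0 * (INR (S N) + /2) ^ j))
      by (apply functional_extensionality; intro; unfold c_minus; cbv beta; f_equal; ring).
    apply sexp_pow_sum_le; intros; rewrite ?Rabs_R1, ?Rabs_R0, ?pow_1_abs; simpl pow; lra.
  - replace (fun i => Cplus (c_minus N i) (c_minus (S N) i))
      with (fun j => RtoC ((-1) ^ S j * (INR N + /2) ^ j + (-1) ^ S j * (INR (S N) + /2) ^ j))
      by (apply functional_extensionality; intro; unfold c_minus; cbv beta;
          rewrite <- RtoC_plus; reflexivity).
    apply sexp_pow_sum_le; intros; rewrite ?Rabs_R1, ?Rabs_R0, ?pow_1_abs; simpl pow; lra.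
Qed.

Definition rhs_partial (N : nat) : series := at_tau1 z (fps_mul prefactor (Omega_partial tvar N)).

Lemma rhs_partial_S N :
  rhs_partial (S N) = smul (rhs_partial N) (pair_factor z (c_plus N) (c_minus N)).
Proof.
  unfold rhs_partial, Omega_partial. rewrite !at_tau1_mul, prod_factors_tvar_S. ring.
Qed.

Lemma boxnorm_rhs_partial_le N :
  boxnorm a (rhs_partial N) <= boxnorm a (rhs_partial 0) * exp (3 * sumR N factor_err).
Proof.
  induction N as [|N IH].
  - unfold fsum. simpl. rewrite Rmult_0_r, exp_0. lra.
  - rewrite rhs_partial_S. eapply Rle_trans; [apply boxnorm_mul|].
    set (P := pair_factor z (c_plus N) (c_minus N)).
    assert (HP : boxnorm a P <= exp (3 * factor_err N)).
    { replace P with (sadd sone (ssub P sone)) by ring. eapply Rle_trans; [apply boxnorm_add|].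
      rewrite boxnorm_one. eapply Rle_trans; [|apply exp_ineq1_le].
      pose proof (step_factor_sub1_le N). fold P in H. lra. }
    rewrite (fsum_S RTheory), Rmult_plus_distr_l, exp_plus, <- Rmult_assoc.
    apply Rmult_le_compat; auto; apply boxnorm_ge0.
Qed.

Definition rhs_bound : R :=
  boxnorm a (rhs_partial 0) * exp (3 * (exp_const a (Im z) / (1 - decay (Im z)))).

Lemma boxnorm_rhs_partial_le_bound N : boxnorm a (rhs_partial N) <= rhs_bound.
Proof.
  eapply Rle_trans; [apply boxnorm_rhs_partial_le|]. unfold rhs_bound.
  apply Rmult_le_compat_l; [apply boxnorm_ge0|]. apply exp_le_compat.
  pose proof (sumR_factor_err_le N). lra.
Qed.

Lemma rhs_mul_coef_close N X :
  boxnorm a (ssub X sone) <= 3 * factor_err N ->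
  Cmod (Cminus (smul (rhs_partial N) X a) (rhs_partial N a)) <= rhs_bound * (3 * factor_err N).
Proof.
  intros HX.
  replace (Cminus (smul (rhs_partial N) X a) (rhs_partial N a))
    with (smul (rhs_partial N) (ssub X sone) a)
    by (replace (smul (rhs_partial N) X) with
          (sadd (rhs_partial N) (smul (rhs_partial N) (ssub X sone))) by ring;
        unfold sadd; ring).
  eapply Rle_trans; [apply Cmod_le_boxnorm|]. eapply Rle_trans; [apply boxnorm_mul|].
  apply Rmult_le_compat;
    [apply boxnorm_ge0 | apply boxnorm_ge0 | apply boxnorm_rhs_partial_le_bound | exact HX].
Qed.

Lemma rhs_coef_converges : exists l, filterlim (fun N => rhs_partial N a) eventually (locally l).
Proof.
  apply (filterlim_C_of_summable_steps _ (fun N => rhs_bound * 3 * factor_err N));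
    [apply ex_series_factor_err|].
  intro N. rewrite rhs_partial_S, Rmult_assoc. apply rhs_mul_coef_close, step_factor_sub1_le.
Qed.

Lemma lhs_rhs_coef_close N :
  Cmod (Cminus (Omega_partial tT (S N) a z) (rhs_partial N a)) <= rhs_bound * 3 * factor_err N.
Proof.
  change (Omega_partial tT (S N) a z) with (at_tau1 z (Omega_partial tT (S N)) a).
  rewrite Omega_partial_tT_S, Rmult_assoc. apply rhs_mul_coef_close, tail_factor_sub1_le.
Qed.

End Convergence.

Theorem theorem2p1 :
  forall (a : list nat) (z : C), 0 < Im z ->
  exists l : C,
    filterlim (fun N => Omega_partial tT N a z) eventually (locally l) /\
    filterlim (fun N => fps_mul prefactor (Omega_partial tvar N) a z)
      eventually (locally l).
Proof.
  intros a z Hy. destruct (rhs_coef_converges a z Hy) as [l Hl]. exists l. split; [|exact Hl].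
  apply filterlim_S,
    (filterlim_C_close (fun N => rhs_partial z N a) _ _ l Hl (lhs_rhs_coef_close a z Hy)).
  apply is_lim_seq_factor_err, Hy.
Qed.
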